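(* Let $n,k,r$ be integers with $k,r\geq 2$ and $n\geq 2k$, and write $n=pk+q$ with integers $p,q$ and $1\leq q\leq k$. Let $H_U(n;k,r)$ be the $r$-uniform hypergraph whose vertex set is a disjoint union $A\cup B_1\cup\cdots\cup B_p$ with $|A|=k$, $|B_i|=k$ for $1\leq i\leq p-1$ and $|B_p|=q$, and whose edges are exactly the $r$-subsets $e$ of the vertex set such that either $e$ meets both $A$ and $B_1\cup\cdots\cup B_p$, or $e\subseteq B_i$ for some $i$ (i.e. $H_U(n;k,r)=((p-1)K_k^r\cup K_q^r)\vee_r (K_k^r)^c$). Then $H_U(n;k,r)$ is vertex-$k$-maximal, and $|E(H_U(n;k,r))|\leq \binom{n}{r}-\binom{n-k}{r}+\left(\frac{n}{k}-2\right)\binom{k}{r}$, with equality if $n$ is a multiple of $k$.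
   Context: Binomial coefficients satisfy $\binom{a}{b}=0$ when $b>a$. A hypergraph $H=(V,E)$ consists of a finite vertex set $V$ and a set $E$ of non-empty subsets of $V$ (edges); it is $r$-uniform if all edges have exactly $r$ elements. The complement $H^c$ has as edges the $r$-subsets of $V$ not in $E$. A subhypergraph is $H'=(V',E')$ with $V'\subseteq V$, $E'\subseteq E$. $H+e=(V,E\cup\{e\})$ for $e\in E(H^c)$. $H-Y$ is the hypergraph induced on $V\setminus Y$ (keeping edges contained in $V\setminus Y$). Connectedness is defined via paths (alternating sequences of distinct vertices and distinct edges with consecutive vertices in the intermediate edge). A vertex-cut is a set $X$ with $H-X$ disconnected. $\kappa(H)$ is the minimum size of a vertex-cut if one exists, and $|V(H)|-1$ otherwise. $\overline{\kappa}(H)=\max\{\kappa(H'): H'\subseteq H\}$. An $r$-uniform hypergraph $H$ is vertex-$k$-maximal if $\overline{\kappa}(H)\leq k$ but $\overline{\kappa}(H+e)\geq k+1$ for every $e\in E(H^c)$. *)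

From HB Require Import structures.
From mathcomp Require Import all_boot all_order all_algebra.
From Stdlib Require Import ClassicalEpsilon.
Set Implicit Arguments. Unset Strict Implicit. Unset Printing Implicit Defensive.

Section Hypergraphs.
Variable T : finType.

Record hgraph := HGraph { hV : {set T}; hE : {set {set T}} }.

Definition is_hypergraph (H : hgraph) : Prop :=
  forall e, e \in hE H -> e != set0 /\ e \subset hV H.

Definition uniform (r : nat) (H : hgraph) : Prop :=
  forall e, e \in hE H -> #|e| = r.

(* vs = [v0; ...; vm], es = [e1; ...; em]: alternating sequence
   v0 e1 v1 ... em vm of distinct vertices and distinct edges, with
   v_{i-1}, v_i in e_i. *)
Definition is_path (H : hgraph) (vs : seq T) (es : seq {set T}) : Prop :=
  [/\ size vs = (size es).+1, uniq vs /\ uniq es,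
      all (fun v => v \in hV H) vs, all (fun e => e \in hE H) es &
      all (fun t : T * T * {set T} => (t.1.1 \in t.2) && (t.1.2 \in t.2))
          (zip (zip vs (behead vs)) es)].

Definition joined (H : hgraph) (u v : T) : Prop :=
  exists vs es, is_path H (u :: vs) es /\ last u vs = v.

Definition connected (H : hgraph) : Prop :=
  forall u v, u \in hV H -> v \in hV H -> joined H u v.

Definition connectedb (H : hgraph) : bool :=
  if excluded_middle_informative (connected H) then true else false.

Definition hdel (H : hgraph) (Y : {set T}) : hgraph :=
  HGraph (hV H :\: Y) [set e in hE H | e \subset hV H :\: Y].

Definition is_vertex_cut (H : hgraph) (X : {set T}) : bool :=
  (X \subset hV H) && ~~ connectedb (hdel H X).

Definition kappa (H : hgraph) : nat :=
  if [exists X, is_vertex_cut H X]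
  then \big[minn/#|T|]_(X | is_vertex_cut H X) #|X|
  else #|hV H|.-1.

Definition subhyp (H' H : hgraph) : bool :=
  [&& hV H' \subset hV H, hE H' \subset hE H &
      [forall e in hE H', e \subset hV H']].

Definition kappabar (H : hgraph) : nat :=
  \max_(P : {set T} * {set {set T}} | subhyp (HGraph P.1 P.2) H)
     kappa (HGraph P.1 P.2).

Definition add_edge (H : hgraph) (e : {set T}) : hgraph :=
  HGraph (hV H) (e |: hE H).

Definition in_compl (r : nat) (H : hgraph) (e : {set T}) : bool :=
  [&& e \subset hV H, #|e| == r & e \notin hE H].

Definition vertex_k_maximal (r k : nat) (H : hgraph) : Prop :=
  [/\ is_hypergraph H, uniform r H, kappabar H <= k &
      forall e, in_compl r H e -> k.+1 <= kappabar (add_edge H e)].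

End Hypergraphs.

(* H_U(n;k,r) on vertex set 'I_n: A = {0..k-1},
   B_j (j = 1..p, indexed here by j' = j-1 : 'I_p) = {i >= k | (i-k) %/ k = j'},
   so |B_j| = k for j < p and |B_p| = n - pk = q when n = pk + q, 1 <= q <= k. *)
Definition HU_A (n k : nat) : {set 'I_n} := [set i : 'I_n | i < k].
Definition HU_B (n k p : nat) (j : 'I_p) : {set 'I_n} :=
  [set i : 'I_n | (k <= i) && ((i - k) %/ k == j)].

Definition HU (n k r p : nat) : hgraph 'I_n :=
  HGraph [set: 'I_n]
    [set e : {set 'I_n} | (#|e| == r) &&
       (((e :&: HU_A n k != set0) && (e :\: HU_A n k != set0))
        || [exists j : 'I_p, e \subset HU_B n k j])].

From HB Require Import structures.
From mathcomp Require Import all_boot all_order all_algebra.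
From Stdlib Require Import ClassicalEpsilon.
From mathcomp Require Import zify.
From mathcomp.algebra_tactics Require Import ring.
Set Implicit Arguments. Unset Strict Implicit. Unset Printing Implicit Defensive.
Import Order.TTheory GRing.Theory Num.Theory.

(* Let H' be a subhypergraph and D its set of vertices outside A.  Edges avoiding A
   lie inside a single block, and no edge lies inside A.  So if D meets two blocks, the at most k
   vertices of H' in A form a vertex-cut; otherwise |D| <= k, and D is a vertex-cut unless H' has
   at most one vertex in A, in which case H' has at most k + 1 vertices.  A non-edge e either lies inside A, or avoids A and meets two blocks.  Take
   W = e ∪ B_1, or W = A ∪ e when r > k, or W = A ∪ e ∪ B_j for a full block B_j meeting e when
   r <= k.  Then |W| >= k + 2, and deleting at most k vertices from the subhypergraph of H + e
   induced on W leaves it connected: two remaining vertices on opposite sides of A lie in a common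
   remaining r-set, which is an edge, and what remains on one side of A is e itself, a subset of a
   block of size at least r, or e ∪ B_j, the union of two complete parts sharing a vertex.  The edges are the C(n,r) - C(k,r) - C(n-k,r) r-sets meeting both A and its
   complement, and the (p-1) C(k,r) + C(q,r) r-subsets of blocks; finally C(q,r) <= (q/k) C(k,r),
   with equality when q = k. *)

Section Hypergraph.
Variable T : finType.
Implicit Types (H : hgraph T) (W X : {set T}).

Lemma connectedbP H : reflect (connected H) (connectedb H).
Proof. by rewrite /connectedb; case: excluded_middle_informative => c; constructor. Qed.

Definition adjacent H (u v : T) : Prop :=
  exists f, [/\ f \in hE H, u \in f & v \in f].

Lemma adjacent_sym H u v : adjacent H u v -> adjacent H v u.
Proof. by case=> f [fE uf vf]; exists f. Qed.

Lemma joined_refl H u : u \in hV H -> joined H u u.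
Proof. by move=> uV; exists [::], [::]; split=> //; split; rewrite //= uV. Qed.

Lemma joined_adjacent H u v : u \in hV H -> v \in hV H -> u != v ->
  adjacent H u v -> joined H u v.
Proof.
move=> uV vV uv [f [fE uf vf]]; exists [:: v], [:: f]; split=> //.
by split; rewrite //= ?inE ?uv ?uV ?vV ?fE ?uf ?vf.
Qed.

Lemma connected_diam2 H :
  (forall u v, u \in hV H -> v \in hV H -> u != v ->
     adjacent H u v \/ exists2 w, w \in hV H & adjacent H u w /\ adjacent H w v) ->
  connected H.
Proof.
move=> hyp u v uV vV; have [<-|uv] := eqVneq u v; first exact: joined_refl.
have [|[w wV [uw wv]]] := hyp u v uV vV uv; first exact: joined_adjacent.
have [ewu|wu] := eqVneq w u; first by move: wv; rewrite ewu; apply: joined_adjacent.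
have [ewv|wv'] := eqVneq w v; first by move: uw; rewrite ewv; apply: joined_adjacent.
case: uw wv => [f1 [f1E uf1 wf1]] [f2 [f2E wf2 vf2]].
have [ef|f12] := eqVneq f1 f2.
  by apply: joined_adjacent => //; exists f2; split; rewrite // -ef.
exists [:: w; v], [:: f1; f2]; split=> //; split=> //=.
- by rewrite !inE !negb_or eq_sym wu uv wv' f12.
- by rewrite uV wV vV.
- by rewrite f1E f2E.
- by rewrite uf1 wf1 wf2 vf2.
Qed.

Lemma connected_clique H : {in hV H &, forall u v, adjacent H u v} -> connected H.
Proof. by move=> hadj; apply: connected_diam2 => u v uV vV _; left; apply: hadj. Qed.

Lemma connected_clique_union H (C1 C2 : {set T}) w :
  hV H = C1 :|: C2 -> w \in C1 -> w \in C2 ->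
  {in C1 &, forall u v, adjacent H u v} -> {in C2 &, forall u v, adjacent H u v} ->
  connected H.
Proof.
move=> VC w1 w2 h1 h2.
apply: connected_diam2 => u v; rewrite VC !inE => /orP[u1|u2] /orP[v1|v2] _.
- by left; apply: h1.
- by right; exists w; rewrite ?inE ?w1 //; split; [apply: h1 | apply: h2].
- by right; exists w; rewrite ?inE ?w1 //; split; [apply: h2 | apply: h1].
- by left; apply: h2.
Qed.

Lemma connected_bipartite H (P : pred T) a b :
  a \in hV H -> b \in hV H -> P a -> ~~ P b ->
  {in hV H &, forall x y, P x -> ~~ P y -> adjacent H x y} -> connected H.
Proof.
move=> aV bV Pa Pb hadj; apply: connected_diam2 => u v uV vV _.
case Pu: (P u); case Pv: (P v).
- right; exists b => //; split; first exact: hadj.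
  by apply: adjacent_sym; apply: hadj.
- by left; apply: hadj; rewrite ?Pv.
- by left; apply: adjacent_sym; apply: hadj; rewrite ?Pu.
- right; exists a => //; split; last by apply: hadj; rewrite ?Pv.
  by apply: adjacent_sym; apply: hadj; rewrite ?Pu.
Qed.

Lemma joined_inv (U : Type) (g : T -> U) H u v :
  (forall f, f \in hE H -> {in f &, forall x y, g x = g y}) ->
  joined H u v -> g u = g v.
Proof.
move=> hg [vs [es [[/eqP]]]]; rewrite eqSS => /eqP + _ _ + + <- {v}.
elim: vs u es => [|v vs IH] u [|f es] //= [sz] /andP[fE aE] /andP[/andP[uf vf] az].
by rewrite (hg f fE u v uf vf); apply: IH az.
Qed.

Lemma separated_vertex_cut (U : Type) (g : T -> U) H X u v :
  X \subset hV H -> u \in hV H :\: X -> v \in hV H :\: X -> g u <> g v ->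
  (forall f, f \in hE H -> f \subset hV H :\: X -> {in f &, forall x y, g x = g y}) ->
  is_vertex_cut H X.
Proof.
move=> sXV uW vW guv hg; rewrite /is_vertex_cut sXV /=.
apply/connectedbP => conn; apply: guv; apply: joined_inv (conn u v uW vW).
by move=> f; rewrite inE => /andP[]; apply: hg.
Qed.

Lemma kappa_le_cut H X : is_vertex_cut H X -> kappa H <= #|X|.
Proof.
move=> cX; rewrite /kappa; case: existsP => [_|[]]; last by exists X.
exact: (@bigmin_le_cond _ nat).
Qed.

Lemma kappa_le_card H : kappa H <= #|hV H|.-1.
Proof.
rewrite /kappa; case: existsP => [[X /[dup] cX /andP[sXV nc]]|_] //.
apply: leq_trans (@bigmin_le_cond _ nat _ _ X _ _ cX) _.
suff : #|X| < #|hV H| by case: #|hV H|.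
rewrite ltnNge; apply: contra nc => le; apply/connectedbP => u v.
by rewrite /= (_ : X = hV H) ?setDv ?inE //; apply/eqP; rewrite eqEcard sXV.
Qed.

Lemma kappa_gt H k : k.+2 <= #|hV H| ->
  (forall X, X \subset hV H -> #|X| <= k -> connected (hdel H X)) ->
  k < kappa H.
Proof.
move=> szV hyp; rewrite /kappa; case: existsP => [_|_]; last by case: #|hV H| szV.
apply: (big_ind (fun x => k < x)) => [|x y|X /andP[sXV nc]].
- exact: leq_trans (ltnW szV) (max_card _).
- by rewrite leq_min => -> ->.
- by rewrite ltnNge; apply: contra nc => cX; apply/connectedbP; apply: hyp.
Qed.

Lemma kappabar_le H k : (forall H', subhyp H' H -> kappa H' <= k) -> kappabar H <= k.
Proof. by move=> hyp; apply/bigmax_leqP => -[V' E'] /hyp. Qed.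

Lemma kappabar_ge H H' : subhyp H' H -> kappa H' <= kappabar H.
Proof.
case: H' => V' E' sub.
exact: (@leq_bigmax_cond _ _ (fun P => kappa (HGraph P.1 P.2)) (V', E')).
Qed.

Definition induced H W : hgraph T := HGraph W [set f in hE H | f \subset W].

Lemma hdel_induced H W X : hdel (induced H W) X = induced H (W :\: X).
Proof.
congr HGraph; apply/setP => f; rewrite !inE -andbA.
by case: (boolP (f \subset W :\: X)) => [fWX|]; rewrite ?andbF // (subset_trans fWX) ?subsetDl.
Qed.

Lemma subhyp_induced H W : W \subset hV H -> subhyp (induced H W) H.
Proof.
move=> sWV; apply/and3P; split=> //; first by apply/subsetP => f; rewrite inE => /andP[].
by apply/forall_inP => f; rewrite inE => /andP[].
Qed.

Lemma kappabar_gt_induced H W k : W \subset hV H -> k.+2 <= #|W| ->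
  (forall X, X \subset W -> #|X| <= k -> connected (induced H (W :\: X))) ->
  k < kappabar H.
Proof.
move=> sWV cW hX; apply: leq_trans (kappabar_ge (subhyp_induced sWV)).
by apply: kappa_gt => // X sXW cX; rewrite hdel_induced; apply: hX.
Qed.

End Hypergraph.

Lemma card_sum_mem (T : finType) (S : {set T}) : #|S| = \sum_x (x \in S).
Proof. by rewrite -sum1_card big_mkcond; apply: eq_bigr => x _; case: (x \in S). Qed.

Section FinsetCounting.
Variable T : finType.
Implicit Types (A B W : {set T}).

Lemma card_disjointU A B : [disjoint A & B] -> #|A :|: B| = #|A| + #|B|.
Proof. by move=> dAB; apply/eqP; rewrite (leq_card_setU A B).2. Qed.

Lemma subsetU_disjoint W A B : W \subset A :|: B -> [disjoint W & A] -> W \subset B.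
Proof. by move=> sW /setDidPl dWA; rewrite -dWA subDset. Qed.

Lemma exists_card_subset W r u v : 2 <= r -> r <= #|W| -> u \in W -> v \in W ->
  exists f : {set T}, [/\ f \subset W, #|f| = r, u \in f & v \in f].
Proof.
move=> r2 rW uW vW; set uv := [set u; v].
have uvW : uv \subset W by apply/subsetP => x; rewrite !inE => /orP[] /eqP ->.
have uv2 : #|uv| <= 2 by rewrite cardsU1 cards1; case: (u \in _).
have : 0 < #|[set S : {set T} | S \subset W :\: uv & #|S| == r - #|uv|]|.
  by rewrite cards_draws bin_gt0 cardsDS // leq_sub2r.
case/card_gt0P => S; rewrite inE => /andP[/subsetDP[sSW dSuv] /eqP cS].
exists (uv :|: S); split.
- by rewrite subUset uvW.
- rewrite card_disjointU 1?disjoint_sym // cS subnKC //; exact: leq_trans uv2 r2.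
- by rewrite !inE eqxx.
- by rewrite !inE eqxx orbT.
Qed.

Definition straddling A r : {set {set T}} :=
  [set f : {set T} | (#|f| == r) && ((f :&: A != set0) && (f :\: A != set0))].

Lemma card_straddling A r : 0 < r ->
  #|straddling A r| + 'C(#|A|, r) + 'C(#|~: A|, r) = 'C(#|T|, r).
Proof.
move=> r0; rewrite -card_draws -!cards_draws !card_sum_mem -!big_split /=.
apply: eq_bigr => f _; rewrite !inE; case: eqP => [cf|]; rewrite ?andbF //= !andbT.
rewrite setI_eq0 setD_eq0 disjoints_subset.
have /set0Pn[x xf] : f != set0 by rewrite -card_gt0 cf.
case fA: (f \subset A); case fC: (f \subset ~: A) => //=.
by move: (subsetP fC x xf); rewrite inE (subsetP fA x xf).
Qed.

End FinsetCounting.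

Lemma sum_nat_unique (I : finType) (P : pred I) :
  (forall i j, P i -> P j -> i = j) -> \sum_i P i = [exists i, P i].
Proof.
move=> uP; case: existsP => [[i Pi]|nP].
  rewrite (bigD1 i) //= Pi big1 // => j ji; case Pj: (P j) => //.
  by move/eqP: ji; case; apply: uP.
by rewrite big1 // => j _; case Pj: (P j) => //; case: nP; exists j.
Qed.

Lemma leq_bin_ratio k q r : q <= k -> 0 < r -> k * 'C(q, r) <= q * 'C(k, r).
Proof.
case: r => // r qk _.
rewrite -(leq_pmul2l (ltn0Sn r)) !mulnA ![r.+1 * _]mulnC -!mulnA -!mul_bin_diag.
rewrite mulnCA leq_mul2l leq_mul2l; apply/orP; right; apply/orP; right.
by apply: leq_bin2l; rewrite -!subn1 leq_sub2r.
Qed.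

Lemma card_ord_lt n c : #|[set i : 'I_n | i < c]| = minn c n.
Proof.
wlog cn : c / c <= n.
  move=> hc; case: (leqP c n) => [cn|nc]; first by rewrite hc // (minn_idPl cn).
  rewrite -[RHS]minnn -(hc n) //; apply: eq_card => i.
  by rewrite !inE ltn_ord (leq_trans (ltn_ord i) (ltnW nc)).
have widen_inj : injective (widen_ord cn) by move=> i j /(congr1 val) eq_ij; apply: val_inj.
rewrite (minn_idPl cn) -[RHS]card_ord -(card_imset _ widen_inj).
apply: eq_card => i; rewrite inE; apply/idP/imsetP => [ic|[j _ ->]] //=.
by exists (Ordinal ic) => //; apply: val_inj.
Qed.

Lemma card_ord_geq n c : #|[set i : 'I_n | c <= i]| = n - c.
Proof.
have := cardsC [set i : 'I_n | i < c]; rewrite card_ord card_ord_lt.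
have -> : ~: [set i : 'I_n | i < c] = [set i : 'I_n | c <= i].
  by apply/setP => i; rewrite !inE -leqNgt.
lia.
Qed.

Section HU.
Variables n k r p q : nat.
Hypotheses (k_ge2 : 2 <= k) (r_ge2 : 2 <= r) (n_ge2k : 2 * k <= n)
  (n_eq : n = p * k + q) (q_gt0 : 0 < q) (q_le_k : q <= k).

Local Notation A := (HU_A n k).
Local Notation B := (@HU_B n k p).
Local Notation HH := (HU n k r p).
Implicit Types (f : {set 'I_n}) (x y u v : 'I_n) (j : 'I_p).

Lemma HU_A_card : #|A| = k.
Proof. by rewrite card_ord_lt; apply/minn_idPl; lia. Qed.

Lemma HU_AC_card : #|~: A| = n - k.
Proof. by have := cardsC A; rewrite card_ord HU_A_card; lia. Qed.

Lemma mem_HU_B j (i : 'I_n) : (i \in B j) = (j.+1 * k <= i < j.+2 * k).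
Proof.
have k0 : 0 < k by lia.
rewrite inE eqn_leq leq_divRL // -[_ %/ _ <= _]ltnS ltn_divLR //.
by apply/and3P/andP => [[ki h1 h2]|[h1 h2]]; split; nia.
Qed.

Lemma HU_B_card j : #|B j| = if j.+1 < p then k else q.
Proof.
have -> : B j = [set i : 'I_n | j.+1 * k <= i] :\: [set i : 'I_n | j.+2 * k <= i].
  by apply/setP => i; rewrite mem_HU_B !inE -ltnNge andbC.
rewrite cardsDS ?card_ord_geq; last first.
  by apply/subsetP => i; rewrite !inE; apply: leq_trans; rewrite leq_mul2r leqnSn orbT.
rewrite [j.+2 * k]mulSn; have jp := ltn_ord j; case: ifP => [jp1|/negbT jp1].
  have : j.+1 * k + k <= p * k by rewrite -mulSnr leq_mul2r jp1 orbT.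
  lia.
have ej : j.+1 = p by lia.
by rewrite ej; lia.
Qed.

Lemma HU_B_card_le j : #|B j| <= k.
Proof. by rewrite HU_B_card; case: ifP. Qed.

Lemma HU_B_card_full j : j.+2 * k <= n -> #|B j| = k.
Proof. by rewrite HU_B_card; case: ifP => // /negbT; rewrite -leqNgt; nia. Qed.

Lemma HU_B_inj (i j : 'I_p) x : x \in B i -> x \in B j -> i = j.
Proof.
by rewrite !inE => /andP[_ /eqP xi] /andP[_ /eqP xj]; apply: val_inj; rewrite /= -xi -xj.
Qed.

Lemma HU_B_cover x : x \notin A -> exists j, x \in B j.
Proof.
rewrite inE -leqNgt => kx.
have lt : (x - k) %/ k < p by rewrite ltn_divLR; [have := ltn_ord x; lia | lia].
by exists (Ordinal lt); rewrite inE kx eqxx.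
Qed.

Lemma HU_disjoint_A_B j : [disjoint A & B j].
Proof.
by rewrite disjoints_subset; apply/subsetP => x; rewrite !inE => xk; rewrite leqNgt xk.
Qed.

Lemma HU_edgeE f : (f \in hE HH) =
  (#|f| == r) && ((f :&: A != set0) && (f :\: A != set0) || [exists j, f \subset B j]).
Proof. by rewrite inE. Qed.

Lemma HU_edge_sub_AC f : f \in hE HH -> f \subset ~: A -> exists j, f \subset B j.
Proof.
rewrite HU_edgeE setI_eq0 disjoints_subset => /andP[_ /orP[/andP[/negP fC _]|/existsP //]].
by move=> /fC.
Qed.

Lemma HU_edge_not_sub_A f : f \in hE HH -> ~~ (f \subset A).
Proof.
rewrite HU_edgeE setD_eq0 => /andP[/eqP cf /orP[/andP[_ //]|/existsP[j fB]]].
apply/negP => fA; have /set0Pn[x xf] : f != set0 by rewrite -card_gt0 cf; lia.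
by move: (HU_disjoint_A_B j) => /disjointFr/(_ (subsetP fA x xf)); rewrite (subsetP fB x xf).
Qed.

Lemma HU_mixed_edge f x y : #|f| = r -> x \in f -> y \in f -> x \in A -> y \notin A ->
  f \in hE HH.
Proof.
move=> cf xf yf xA yA; rewrite HU_edgeE cf eqxx; apply/orP; left.
by apply/andP; split; apply/set0Pn;
  [exists x; rewrite in_setI xf xA | exists y; rewrite in_setD yf yA].
Qed.

Lemma HU_block_edge f j : f \subset B j -> #|f| = r -> f \in hE HH.
Proof. by move=> fB cf; rewrite HU_edgeE cf eqxx; apply/orP; right; apply/existsP; exists j. Qed.

Lemma HU_hypergraph : is_hypergraph HH.
Proof.
move=> f; rewrite HU_edgeE => /andP[/eqP cf _]; split; last exact: subsetT.
by rewrite -card_gt0 cf; lia.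
Qed.

Lemma HU_uniform : uniform r HH.
Proof. by move=> f; rewrite HU_edgeE => /andP[/eqP]. Qed.

Lemma kappa_le_small_outside (H : hgraph 'I_n) : subhyp H HH ->
  #|hV H :\: A| <= k -> kappa H <= k.
Proof.
case/and3P=> _ sE _ small.
have [le1|/card_gt1P[u [v [uA vA uv]]]] := leqP #|hV H :&: A| 1.
  by apply: leq_trans (kappa_le_card _) _; rewrite -(cardsID A (hV H)); lia.
have VA : hV H :\: (hV H :\: A) = hV H :&: A by rewrite setDDr setDv set0U.
apply: leq_trans (kappa_le_cut (X := hV H :\: A) _) small.
apply: (@separated_vertex_cut _ _ id _ _ u v); rewrite ?VA ?subsetDl //; first exact/eqP.
move=> f fE fA; move: (HU_edge_not_sub_A (subsetP sE f fE)).
by rewrite (subset_trans fA) ?subsetIr.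
Qed.

Lemma kappa_le_two_blocks (H : hgraph 'I_n) u v j : subhyp H HH ->
  u \in hV H :\: A -> v \in hV H :\: A -> u \in B j -> v \notin B j -> kappa H <= k.
Proof.
case/and3P=> _ sE _ uW vW uB vB.
apply: leq_trans (kappa_le_cut (X := hV H :&: A) _) _; last first.
  by rewrite (leq_trans (subset_leq_card (subsetIr _ _))) ?HU_A_card.
have VA : hV H :\: (hV H :&: A) = hV H :\: A by rewrite setDIr setDv set0U.
apply: (@separated_vertex_cut _ _ (fun x => x \in B j) _ _ u v); rewrite ?VA ?subsetIl //.
  by rewrite uB (negbTE vB).
move=> f fE fW x y xf yf.
have fC : f \subset ~: A by rewrite (subset_trans fW) // setDE subsetIr.
have [j' fB] := HU_edge_sub_AC (subsetP sE f fE) fC.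
have xB := subsetP fB x xf; have yB := subsetP fB y yf.
by apply/idP/idP => /HU_B_inj => [/(_ _ xB)|/(_ _ yB)] ->.
Qed.

Lemma HU_kappabar_le : kappabar HH <= k.
Proof.
apply: kappabar_le => H sub.
have [D0|[u uD]] := set_0Vmem (hV H :\: A).
  by apply: kappa_le_small_outside; rewrite ?D0 ?cards0.
have [j uB] : exists j, u \in B j by apply: HU_B_cover; move: uD; rewrite inE => /andP[].
have [DB|/subsetPn[v vD vB]] := boolP (hV H :\: A \subset B j).
  exact: kappa_le_small_outside sub (leq_trans (subset_leq_card DB) (HU_B_card_le j)).
exact: kappa_le_two_blocks sub uD vD uB vB.
Qed.

Section AddEdge.
Variable e : {set 'I_n}.
Hypothesis e_card : #|e| = r.
Local Notation G := (add_edge HH e).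
Implicit Types (W Z : {set 'I_n}).

Lemma induced_edge W f : f \subset W -> (f == e) || (f \in hE HH) -> f \in hE (induced G W).
Proof. by move=> fW fE; rewrite /= in_set in_setU1 fE fW. Qed.

Lemma adjacent_mixed W x y : r <= #|W| -> x \in W -> y \in W -> x \in A -> y \notin A ->
  adjacent (induced G W) x y.
Proof.
move=> rW xW yW xA yA; have [f [fW cf xf yf]] := exists_card_subset r_ge2 rW xW yW.
by exists f; split=> //; apply: induced_edge fW _; rewrite (HU_mixed_edge cf xf yf xA yA) orbT.
Qed.

Lemma adjacent_block W Z j x y : Z \subset W -> Z \subset B j -> r <= #|Z| ->
  x \in Z -> y \in Z -> adjacent (induced G W) x y.
Proof.
move=> ZW ZB rZ xZ yZ; have [f [fZ cf xf yf]] := exists_card_subset r_ge2 rZ xZ yZ.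
exists f; split=> //; apply: induced_edge (subset_trans fZ ZW) _.
by rewrite (HU_block_edge (subset_trans fZ ZB) cf) orbT.
Qed.

Lemma adjacent_new_edge W x y : e \subset W -> x \in e -> y \in e -> adjacent (induced G W) x y.
Proof. by move=> eW xe ye; exists e; split=> //; apply: induced_edge; rewrite ?eqxx. Qed.

Lemma connected_sides W : r <= #|W| ->
  (W \subset A -> connected (induced G W)) -> (W \subset ~: A -> connected (induced G W)) ->
  connected (induced G W).
Proof.
move=> rW hA hC; have [/hA //|/subsetPn[b bW bA]] := boolP (W \subset A).
have [/hC //|/subsetPn[a aW]] := boolP (W \subset ~: A); rewrite inE negbK => aA.
apply: (@connected_bipartite _ (induced G W) (fun x => x \in A) a b) => // x y xW yW.
exact: adjacent_mixed.
Qed.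

Lemma connected_sub_edge W : W \subset e -> r <= #|W| -> connected (induced G W).
Proof.
move=> We rW; have eW : e \subset W by have /eqP <- : W == e by rewrite eqEcard We e_card rW.
by apply: connected_clique => x y xW yW; apply: adjacent_new_edge; rewrite ?(subsetP We).
Qed.

Lemma connected_sub_block W j : W \subset B j -> r <= #|W| -> connected (induced G W).
Proof. by move=> WB rW; apply: connected_clique => x y; apply: adjacent_block WB rW. Qed.

Lemma kappabar_add_edge_sub_A : e \subset A -> k < kappabar G.
Proof.
move=> eA; have p0 : 0 < p by nia.
pose j0 := Ordinal p0; have B0 : #|B j0| = k by apply: HU_B_card_full.
have deB : [disjoint e & B j0] := disjointWl eA (HU_disjoint_A_B j0).
apply: (@kappabar_gt_induced _ _ (e :|: B j0)) => [||X sXW cX].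
- exact: subsetT.
- by rewrite card_disjointU // e_card B0; lia.
have rW : r <= #|(e :|: B j0) :\: X|.
  by rewrite cardsDS // card_disjointU // e_card B0; lia.
apply: (connected_sides rW) => [WA|WC].
  apply: connected_sub_edge rW; rewrite setUC in WA *.
  by apply: subsetU_disjoint (subsetDl _ _) (disjointWl WA (HU_disjoint_A_B j0)).
apply: connected_sub_block rW; apply: subsetU_disjoint (subsetDl _ _) _.
by rewrite disjoints_subset (subset_trans WC) ?setCS.
Qed.

Lemma kappabar_add_edge_large : e \subset ~: A -> k < r -> k < kappabar G.
Proof.
move=> eC kr; have dAe : [disjoint A & e] by rewrite disjoint_sym disjoints_subset.
apply: (@kappabar_gt_induced _ _ (A :|: e)) => [||X sXW cX].
- exact: subsetT.
- by rewrite card_disjointU // HU_A_card e_card; lia.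
have rW : r <= #|(A :|: e) :\: X|.
  by rewrite cardsDS // card_disjointU // HU_A_card e_card; lia.
apply: (connected_sides rW) => [WA|WC].
  by move: (subset_leq_card WA); rewrite HU_A_card; lia.
apply: connected_sub_edge rW; apply: subsetU_disjoint (subsetDl _ _) _.
by rewrite disjoints_subset.
Qed.

Lemma kappabar_add_edge_full_block j w z : e \subset ~: A -> r <= k -> j.+1 < p ->
  w \in e -> w \in B j -> z \in e -> z \notin B j -> k < kappabar G.
Proof.
move=> eC rk jp we wB ze zB; set S := e :|: B j.
have Bk : #|B j| = k.
  apply: HU_B_card_full; have : j.+2 * k <= p * k by rewrite leq_mul2r jp orbT.
  lia.
have cS : k < #|S|.
  rewrite -Bk; apply: proper_card; apply/properP; split; first exact: subsetUr.
  by exists z; rewrite // in_setU ze.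
have dAS : [disjoint A & S].
  rewrite disjoints_subset setCU subsetI -!disjoints_subset HU_disjoint_A_B andbT.
  by rewrite disjoint_sym disjoints_subset.
apply: (@kappabar_gt_induced _ _ (A :|: S)) => [||X sXW cX].
- exact: subsetT.
- by rewrite card_disjointU // HU_A_card; lia.
have cW : k < #|(A :|: S) :\: X| by rewrite cardsDS // card_disjointU // HU_A_card; lia.
apply: (connected_sides (leq_trans rk (ltnW cW))) => [WA|WC].
  by move: (subset_leq_card WA); rewrite HU_A_card; lia.
have AX : A \subset X.
  apply/subsetP => t tA; apply: contraT => tX.
  have tW : t \in (A :|: S) :\: X by rewrite in_setD tX in_setU tA.
  by move: (subsetP WC t tW); rewrite inE tA.
have -> : (A :|: S) :\: X = S.
  have -> : X = A by apply/esym/eqP; rewrite eqEcard AX HU_A_card cX.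
  by rewrite setDUl setDv set0U; apply/setDidPl; rewrite disjoint_sym.
apply: (@connected_clique_union _ _ e (B j) w) => // [x y xe ye|x y xB yB].
  exact: adjacent_new_edge (subsetUl _ _) xe ye.
by apply: (adjacent_block (subsetUr _ _) (subxx _)); rewrite ?Bk.
Qed.

Lemma HU_straddle_blocks : e \subset ~: A -> ~~ [exists j, e \subset B j] ->
  exists j w z, [/\ j.+1 < p, w \in e, w \in B j, z \in e & z \notin B j].
Proof.
move=> eC nB; have /set0Pn[x xe] : e != set0 by rewrite -card_gt0 e_card; lia.
have notA t : t \in e -> t \notin A by move=> te; move: (subsetP eC t te); rewrite inE.
have [j1 xB1] := HU_B_cover (notA x xe).
have /subsetPn[y ye yB1] : ~~ (e \subset B j1).
  by apply: contra nB => eB; apply/existsP; exists j1.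
have [j2 yB2] := HU_B_cover (notA y ye).
have j12 : j1 != j2 by apply/eqP => ej; rewrite ej yB2 in yB1.
have [lt1|ge1] := ltnP j1.+1 p; first by exists j1, x, y.
exists j2, y, x; split=> //.
  by have := ltn_ord j1; have := ltn_ord j2; move: j12; rewrite -val_eqE /=; lia.
by apply/negP => xB2; rewrite (HU_B_inj xB1 xB2) eqxx in j12.
Qed.

Lemma HU_kappabar_add_edge : e \notin hE HH -> k < kappabar G.
Proof.
rewrite HU_edgeE e_card eqxx /= negb_or => /andP[+ nB].
rewrite negb_and !negbK => /orP[eA0|eA0].
  have eC : e \subset ~: A by rewrite -disjoints_subset -setI_eq0.
  have [kr|rk] := ltnP k r; first exact: kappabar_add_edge_large.
  have [j [w [z [jp we wB ze zB]]]] := HU_straddle_blocks eC nB.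
  exact: kappabar_add_edge_full_block eC rk jp we wB ze zB.
by apply: kappabar_add_edge_sub_A; rewrite -setD_eq0.
Qed.

End AddEdge.

Lemma HU_card_edges : #|hE HH| = #|straddling A r| + \sum_j 'C(#|B j|, r).
Proof.
have blocks : \sum_j 'C(#|B j|, r) =
    \sum_(f : {set 'I_n}) ((#|f| == r) && [exists j, f \subset B j]).
  rewrite (eq_bigr (fun j => \sum_(f : {set 'I_n}) ((f \subset B j) && (#|f| == r))));
    last by move=> j _; rewrite -cards_draws card_sum_mem; apply: eq_bigr => f _; rewrite inE.
  rewrite exchange_big; apply: eq_bigr => f _ /=.
  rewrite sum_nat_unique => [|i j /andP[fi /eqP cf] /andP[fj _]].
    congr nat_of_bool; apply/existsP/andP => [[j /andP[fB ->]]|[cf /existsP[j fB]]].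
      by split=> //; apply/existsP; exists j.
    by exists j; rewrite fB.
  have /set0Pn[x xf] : f != set0 by rewrite -card_gt0 cf; lia.
  exact: HU_B_inj (subsetP fi x xf) (subsetP fj x xf).
rewrite blocks !card_sum_mem -big_split; apply: eq_bigr => f _.
rewrite HU_edgeE inE; case: (#|f| == r) => //=.
case: existsP => [[j fB]|_]; last by rewrite orbF addn0.
suff -> : f :&: A == set0 by [].
by rewrite setI_eq0 disjoint_sym (disjointWr fB) // HU_disjoint_A_B.
Qed.

Lemma HU_sum_blocks : \sum_j 'C(#|B j|, r) = p.-1 * 'C(k, r) + 'C(q, r).
Proof.
have [p' ep] : exists p', p = p'.+1 by exists p.-1; rewrite prednK //; nia.
rewrite (eq_bigr (fun j : 'I_p => 'C(if j.+1 < p then k else q, r))) => [|j _]; last first.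
  by rewrite HU_B_card.
rewrite -(big_mkord xpredT (fun i : nat => 'C(if i.+1 < p then k else q, r))).
rewrite ep big_nat_recr //=.
rewrite ltnn (@eq_big_nat _ _ _ 0 p' _ (fun=> 'C(k, r))) => [|i /andP[_ ip]]; last first.
  by rewrite ltnS ip.
by rewrite sum_nat_const_nat subn0.
Qed.

Local Notation bound :=
  ('C(n, r)%:R - 'C(n - k, r)%:R + (n%:R / k%:R - 2) * 'C(k, r)%:R : rat)%R.

Lemma HU_edges_gap :
  (bound - #|hE HH|%:R = q%:R / k%:R * 'C(k, r)%:R - 'C(q, r)%:R :> rat)%R.
Proof.
have hc : #|hE HH| + 'C(k, r) + 'C(n - k, r) = 'C(n, r) + p.-1 * 'C(k, r) + 'C(q, r).
  have := card_straddling A (_ : 0 < r); rewrite HU_A_card HU_AC_card card_ord.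
  by rewrite HU_card_edges HU_sum_blocks; lia.
have p0 : 0 < p by nia.
have k0 : (k%:R != 0 :> rat)%R by rewrite pnatr_eq0; lia.
have hn : (n%:R / k%:R = p%:R + q%:R / k%:R :> rat)%R.
  by rewrite n_eq natrD natrM mulrDl mulfK.
have := congr1 (fun x : nat => (x%:R : rat)%R) hc.
rewrite /= !natrD natrM -subn1 natrB // => h.
have -> : (#|hE HH|%:R = 'C(n, r)%:R + (p%:R - 1) * 'C(k, r)%:R + 'C(q, r)%:R
                        - 'C(k, r)%:R - 'C(n - k, r)%:R :> rat)%R by rewrite -h; ring.
by rewrite hn; ring.
Qed.

Lemma HU_card_edges_le : (#|hE HH|%:R <= bound :> rat)%R.
Proof.
rewrite -subr_ge0 HU_edges_gap subr_ge0 mulrAC ler_pdivlMr ?ltr0n; last lia.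
by rewrite -!natrM ler_nat mulnC leq_bin_ratio //; lia.
Qed.

Lemma HU_card_edges_eq : k %| n -> (#|hE HH|%:R = bound :> rat)%R.
Proof.
move=> kn; have qk : q = k.
  apply/eqP; rewrite eqn_leq q_le_k dvdn_leq //.
  by rewrite -(dvdn_addr q (dvdn_mull p (dvdnn k))) -n_eq.
apply/eqP; rewrite eq_sym -subr_eq0 HU_edges_gap qk divff ?mul1r ?subrr //.
by rewrite pnatr_eq0; lia.
Qed.

End HU.

Theorem lemma4p1 (n k r p q : nat) :
  2 <= k -> 2 <= r -> 2 * k <= n -> n = p * k + q -> 1 <= q <= k ->
  vertex_k_maximal r k (HU n k r p) /\
  ((#|hE (HU n k r p)|%:R : rat) <=
     'C(n, r)%:R - 'C(n - k, r)%:R + (n%:R / k%:R - 2) * 'C(k, r)%:R)%R /\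
  ((k %| n) -> (#|hE (HU n k r p)|%:R : rat) =
     ('C(n, r)%:R - 'C(n - k, r)%:R + (n%:R / k%:R - 2) * 'C(k, r)%:R)%R).
Proof.
move=> k2 r2 nk npq /andP[q1 qk]; split; [split | split].
- exact: HU_hypergraph k2 r2 nk npq q1 qk.
- exact: HU_uniform.
- exact: HU_kappabar_le k2 r2 nk npq q1 qk.
- move=> e /and3P[_ /eqP e_card eE].
  exact: (HU_kappabar_add_edge k2 r2 nk npq q1 qk e_card eE).
- exact: HU_card_edges_le k2 r2 nk npq q1 qk.
- exact: HU_card_edges_eq k2 r2 nk npq q1 qk.
Qed.
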